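(* For every integer $m\ge1$ and every $\beta\in\mathbb{R}$, with $F_m(i,\beta)$ denoting the value at $x=\frac12$ (i.e. $e^{i\pi x}=i$) of $$F_m(e^{i\pi x},\beta)=e^{m\pi ix}e^{-2\pi i\beta x}\frac{\sin^m\pi x}{\pi^{m-1}}\frac{d^{m-1}}{dx^{m-1}}\Big((i-\cot\pi x)e^{2\pi i\beta x}\Big),$$ one has $F_m(i,\beta)=2^{m-1}i^me^{m\pi i/2}E_{m-1}(\beta)$.
   Context: Bernoulli numbers: $B_0=1$, $B_n=-\frac1{n+1}\sum_{k=0}^{n-1}\binom{n+1}{k}B_k$. Euler polynomials: $E_n(x)=\frac{1}{n+1}\sum_{k=1}^{n+1}\binom{n+1}{k}(2-2^{k+1})B_kx^{n+1-k}$ (so $E_0=1$, $E_1(x)=x-\frac12$, $E_2(x)=x^2-x$). *)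

From Stdlib Require Import Reals List.
From Coquelicot Require Import Coquelicot.
Open Scope R_scope.

Fixpoint bern_upto (n : nat) : list R :=
  match n with
  | O => 1 :: nil
  | S p =>
      let l := bern_upto p in
      l ++ ((- / INR (S p + 1)) *
              sum_f_R0 (fun k => Binomial.C (S p + 1) k * nth k l 0) p) :: nil
  end.

Definition bernoulli (n : nat) : R := nth n (bern_upto n) 0.

(* Euler polynomials:
   E_n(x) = 1/(n+1) sum_{k=1}^{n+1} C(n+1,k) (2 - 2^{k+1}) B_k x^{n+1-k}
   (reindexed with k = j+1, j = 0..n). *)
Definition euler_poly (n : nat) (x : R) : R :=
  / INR (n + 1) *
  sum_f_R0 (fun j => Binomial.C (n + 1) (j + 1) * (2 - 2 ^ (j + 2))
                     * bernoulli (j + 1) * x ^ (n - j)) n.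

Definition cis (t : R) : C := (cos t, sin t).

Definition CDerive_n (f : R -> C) (n : nat) (x : R) : C :=
  (Derive_n (fun t => Re (f t)) n x, Derive_n (fun t => Im (f t)) n x).

Definition cot (x : R) : R := cos x / sin x.

(* F_m(e^{i pi x}, beta) as a function of real x *)
Definition F (m : nat) (beta x : R) : C :=
  (cis (INR m * PI * x) * cis (- 2 * PI * beta * x)
   * RtoC (sin (PI * x) ^ m / PI ^ (m - 1))
   * CDerive_n (fun t => ((Ci - RtoC (cot (PI * t))) * cis (2 * PI * beta * t))%C)
               (m - 1) x)%C.

From Stdlib Require Import Reals List Lia Lra Arith.
From Coquelicot Require Import Coquelicot.
Open Scope R_scope.

(* Let h(x) = i - cot(pi x).  Up to explicit factors, F_m(i, beta) is the
   (m-1)-st derivative at x = 1/2 of h(x) e^(2 pi i beta x), which Leibniz's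
   rule expresses through the derivatives h^(k)(1/2).  On (0,1) we have
   h(x) e^(2 pi i x) = h(x) - 2i, and Leibniz's rule applied to this product
   shows that the numbers h^(k)(1/2) / (i (2 pi i)^k) satisfy e_0 = 1 and
   sum_(j<k) C(k,j) e_j + 2 e_k = 0 for k >= 1.  This is the recurrence of the
   Euler numbers E_k(0) = (2 - 2^(k+2)) B_(k+1) / (k+1), which follows from the
   Bernoulli recurrence and the identity sum_k C(N,k) 2^k B_k = (2 - 2^N) B_N.
   Finally E_n(beta) = sum_j C(n,j) E_j(0) beta^(n-j). *)

(* Pascal's triangle with real entries; unlike [Binomial.C n k] it vanishes for [k > n]. *)
Fixpoint binom (n k : nat) : R :=
  match n, k with
  | _, O => 1
  | O, S _ => 0
  | S n', S k' => binom n' k' + binom n' (S k')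
  end.

Lemma binom_n0 n : binom n 0 = 1.
Proof. now destruct n. Qed.

Lemma binom_gt n k : (n < k)%nat -> binom n k = 0.
Proof.
  revert k; induction n as [|n IH]; intros [|k] Hk; try lia; simpl; auto.
  rewrite !IH by lia; ring.
Qed.

Lemma binom_nn n : binom n n = 1.
Proof. induction n as [|n IH]; simpl; auto. rewrite IH, binom_gt by lia; ring. Qed.

Lemma binom_Sn_n n : binom (S n) n = INR (S n).
Proof.
  induction n as [|n IH]; [simpl; ring|].
  change (binom (S n) n + binom (S n) (S n) = INR (S (S n))).
  rewrite IH, binom_nn, (S_INR (S n)); ring.
Qed.

Lemma C_binom n k : (k <= n)%nat -> Binomial.C n k = binom n k.
Proof.
  revert k; induction n as [|n IH]; intros [|k] Hk; try lia.
  - unfold Binomial.C. simpl. field.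
  - unfold Binomial.C. rewrite binom_n0, Nat.sub_0_r. rewrite Rmult_1_l. field.
    apply INR_fact_neq_0.
  - destruct (Nat.eq_dec k n) as [->|Hkn].
    + unfold Binomial.C. rewrite binom_nn, Nat.sub_diag. change (INR (fact 0)) with 1. field.
      apply INR_fact_neq_0.
    + rewrite <- pascal by lia. simpl. rewrite !IH by lia. reflexivity.
Qed.

Lemma binom_absorb n j : (j <= n)%nat ->
  INR (S j) * binom (S n) (S j) = INR (S n) * binom n j.
Proof.
  intros Hj. rewrite <- !C_binom by lia. unfold Binomial.C.
  replace (S n - S j)%nat with (n - j)%nat by lia.
  rewrite !fact_simpl, !mult_INR. field.
  repeat split; try apply INR_fact_neq_0; apply not_0_INR; lia.
Qed.

Lemma binom_pow2_S M k : binom M k * 2 ^ (S M - k) = 2 * (binom M k * 2 ^ (M - k)).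
Proof.
  destruct (le_lt_dec k M) as [Hk|Hk].
  - replace (S M - k)%nat with (S (M - k)) by lia. simpl; ring.
  - rewrite binom_gt by lia; ring.
Qed.

Lemma sum_f_R0_Sl (f : nat -> R) n :
  sum_f_R0 f (S n) = f O + sum_f_R0 (fun k => f (S k)) n.
Proof.
  induction n as [|n IH]; [simpl; ring|].
  change (sum_f_R0 f (S n) + f (S (S n)) = f O + (sum_f_R0 (fun k => f (S k)) n + f (S (S n)))).
  rewrite IH; ring.
Qed.

Lemma sum_f_R0_trunc (f : nat -> R) n N : (n <= N)%nat ->
  (forall k, (n < k <= N)%nat -> f k = 0) -> sum_f_R0 f N = sum_f_R0 f n.
Proof.
  induction 1 as [|N HnN IH]; intros Hz; auto.
  simpl. rewrite IH, Hz by (lia || (intros; apply Hz; lia)). ring.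
Qed.

Lemma sum_f_R0_swap (u : nat -> nat -> R) m n :
  sum_f_R0 (fun i => sum_f_R0 (u i) n) m = sum_f_R0 (fun j => sum_f_R0 (fun i => u i j) m) n.
Proof.
  rewrite <- !sum_n_Reals.
  rewrite (sum_n_ext _ (fun i => sum_n (u i) n)) by (intros; now rewrite sum_n_Reals).
  rewrite sum_n_switch. apply sum_n_ext. intros; now rewrite sum_n_Reals.
Qed.

Lemma sum_binom_binom M k :
  sum_f_R0 (fun n => binom M n * binom n k) M = binom M k * 2 ^ (M - k).
Proof.
  revert k; induction M as [|M IH]; intros k; [destruct k; simpl; ring|].
  assert (Hshift : sum_f_R0 (fun n => binom M (S n) * binom (S n) k) M
                   = binom M k * 2 ^ (M - k) - binom 0 k).
  { rewrite <- IH. pose proof (sum_f_R0_Sl (fun n => binom M n * binom n k) M) as E.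
    rewrite tech5 in E. rewrite binom_gt, binom_n0 in E by lia. lra. }
  rewrite sum_f_R0_Sl, binom_n0.
  rewrite (sum_eq _ (fun n => binom M n * binom (S n) k + binom M (S n) * binom (S n) k))
    by (intros; simpl; ring).
  rewrite plus_sum, Hshift.
  destruct k as [|k].
  - rewrite (sum_eq _ (fun n => binom M n * binom n 0)) by (intros; rewrite !binom_n0; ring).
    rewrite IH, !binom_n0, !Nat.sub_0_r. simpl pow. ring.
  - rewrite (sum_eq _ (fun n => binom M n * binom n k + binom M n * binom n (S k)))
      by (intros; simpl; ring).
    pose proof (binom_pow2_S M (S k)) as P. cbn [Nat.sub] in P.
    rewrite plus_sum, !IH. cbn [binom Nat.sub]. lra.
Qed.

Lemma sum_binom_pascal (b : nat -> R) n :
  sum_f_R0 (fun k => binom n k * (b (S k) + b k)) n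
  = sum_f_R0 (fun k => binom (S n) k * b k) (S n).
Proof.
  pose proof (sum_f_R0_Sl (fun k => binom n k * b k) n) as E.
  rewrite tech5, binom_gt, binom_n0 in E by lia.
  rewrite sum_f_R0_Sl, binom_n0.
  rewrite (sum_eq (fun k => binom (S n) (S k) * b (S k))
                  (fun k => binom n k * b (S k) + binom n (S k) * b (S k)))
    by (intros; simpl; ring).
  rewrite (sum_eq (fun k => binom n k * (b (S k) + b k))
                  (fun k => binom n k * b (S k) + binom n k * b k)) by (intros; ring).
  rewrite !plus_sum. lra.
Qed.

Lemma length_bern_upto n : length (bern_upto n) = S n.
Proof. induction n as [|n IH]; simpl; auto. rewrite length_app, IH. simpl. lia. Qed.

Lemma nth_bern_upto n k : (k <= n)%nat -> nth k (bern_upto n) 0 = bernoulli k.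
Proof.
  induction n as [|n IH]; intros Hk.
  - now replace k with O by lia.
  - destruct (Nat.eq_dec k (S n)) as [->|Hkn]; [reflexivity|].
    simpl bern_upto. rewrite app_nth1 by (rewrite length_bern_upto; lia). apply IH. lia.
Qed.

Lemma bernoulli_S n : bernoulli (S n) =
  - / INR (S (S n)) * sum_f_R0 (fun k => binom (S (S n)) k * bernoulli k) n.
Proof.
  unfold bernoulli at 1. cbn [bern_upto]. cbv zeta.
  rewrite app_nth2, length_bern_upto, Nat.sub_diag by (rewrite length_bern_upto; lia).
  replace (S n + 1)%nat with (S (S n)) by lia. cbn [nth]. f_equal.
  apply sum_eq; intros k Hk. rewrite nth_bern_upto, C_binom by lia. reflexivity.
Qed.

Definition delta0 (n : nat) : R := match n with O => 1 | S _ => 0 end.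

Lemma sum_binom_bernoulli n :
  sum_f_R0 (fun k => binom (S n) k * bernoulli k) n = delta0 n.
Proof.
  destruct n as [|n]; [simpl; unfold bernoulli; simpl; ring|].
  rewrite tech5, binom_Sn_n, bernoulli_S. simpl delta0.
  field. apply not_0_INR. lia.
Qed.

Lemma binomial_transform_eq0 (a : nat -> R) :
  (forall N, sum_f_R0 (fun n => binom (S N) n * a n) N = 0) -> forall n, a n = 0.
Proof.
  intros Ha. apply Nat.strong_induction_le.
  - specialize (Ha O). simpl in Ha. lra.
  - intros n IH. specialize (Ha (S n)). rewrite tech5 in Ha.
    rewrite (sum_eq _ (fun _ => 0)), sum_cte, binom_Sn_n in Ha
      by (intros k Hk; rewrite IH by lia; ring).
    assert (INR (S (S n)) <> 0) by (apply not_0_INR; lia).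
    apply (Rmult_eq_reg_l (INR (S (S n)))); [nra|auto].
Qed.

Lemma binomial_transform_sum_pow2_bernoulli M :
  sum_f_R0 (fun n => binom (S M) n * sum_f_R0 (fun k => binom n k * 2 ^ k * bernoulli k) n) M
  = 2 ^ S M * delta0 M - sum_f_R0 (fun k => binom (S M) k * 2 ^ k * bernoulli k) M.
Proof.
  rewrite (sum_eq _ (fun n =>
    sum_f_R0 (fun k => binom (S M) n * (binom n k * 2 ^ k * bernoulli k)) M)).
  2:{ intros n Hn. rewrite scal_sum, (sum_f_R0_trunc _ n M) by
        (lia || (intros k Hk; rewrite (binom_gt n k) by lia; ring)).
      apply sum_eq; intros; ring. }
  rewrite sum_f_R0_swap, <- sum_binom_bernoulli, scal_sum, <- minus_sum.
  apply sum_eq. intros k Hk.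
  pose proof (sum_binom_binom (S M) k) as HB. rewrite tech5, binom_nn in HB.
  replace (2 ^ S M) with (2 ^ k * 2 ^ (S M - k)) by (rewrite <- pow_add; f_equal; lia).
  rewrite (sum_eq _ (fun n => binom (S M) n * binom n k * (2 ^ k * bernoulli k))) by (intros; ring).
  rewrite <- scal_sum. nra.
Qed.

(* This is [B_N(1/2) = (2^(1-N) - 1) B_N]. *)
Lemma sum_binom_pow2_bernoulli N :
  sum_f_R0 (fun k => binom N k * 2 ^ k * bernoulli k) N = (2 - 2 ^ N) * bernoulli N.
Proof.
  set (lhs n := sum_f_R0 (fun k => binom n k * 2 ^ k * bernoulli k) n).
  enough (H : forall n, lhs n - (2 - 2 ^ n) * bernoulli n = 0)
    by (specialize (H N); unfold lhs in H; lra).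
  apply binomial_transform_eq0. intros M.
  rewrite (sum_eq _ (fun n => binom (S M) n * lhs n - binom (S M) n * (2 - 2 ^ n) * bernoulli n))
    by (intros; ring).
  rewrite minus_sum. unfold lhs. rewrite binomial_transform_sum_pow2_bernoulli.
  rewrite (sum_eq (fun n => binom (S M) n * (2 - 2 ^ n) * bernoulli n)
                  (fun n => binom (S M) n * bernoulli n * 2 - binom (S M) n * 2 ^ n * bernoulli n))
    by (intros; ring).
  rewrite minus_sum, <- scal_sum, sum_binom_bernoulli.
  destruct M; simpl; ring.
Qed.

(* [euler0 j = E_j(0)]. *)
Definition euler0 (j : nat) : R := (2 - 2 ^ S (S j)) * bernoulli (S j) / INR (S j).

Lemma euler_poly_binomial n x :
  euler_poly n x = sum_f_R0 (fun j => binom n j * euler0 j * x ^ (n - j)) n.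
Proof.
  unfold euler_poly. rewrite scal_sum. apply sum_eq. intros j Hj.
  replace (n + 1)%nat with (S n) by lia. replace (j + 1)%nat with (S j) by lia.
  replace (j + 2)%nat with (S (S j)) by lia.
  rewrite C_binom by lia. unfold euler0.
  assert (INR (S j) <> 0) by (apply not_0_INR; lia).
  assert (INR (S n) <> 0) by (apply not_0_INR; lia).
  replace (binom (S n) (S j)) with (INR (S n) * binom n j / INR (S j))
    by (rewrite <- binom_absorb by exact Hj; field; assumption).
  field; split; assumption.
Qed.

Lemma euler0_rec m :
  sum_f_R0 (fun j => binom m j * euler0 j) m + euler0 m = 2 * delta0 m.
Proof.
  assert (Hm : INR (S m) <> 0) by (apply not_0_INR; lia).
  assert (Hsum : INR (S m) * sum_f_R0 (fun j => binom m j * euler0 j) m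
     = sum_f_R0 (fun j => binom (S m) (S j) * bernoulli (S j)) m * 2
       - sum_f_R0 (fun j => binom (S m) (S j) * 2 ^ S j * bernoulli (S j)) m * 2).
  { rewrite scal_sum, !(Rmult_comm (sum_f_R0 _ _)), !scal_sum, <- minus_sum.
    apply sum_eq. intros j Hj. unfold euler0.
    assert (INR (S j) <> 0) by (apply not_0_INR; lia).
    replace (binom (S m) (S j)) with (INR (S m) * binom m j / INR (S j))
      by (rewrite <- binom_absorb by exact Hj; field; assumption).
    rewrite <- (tech_pow_Rmult 2 (S j)). field. assumption. }
  assert (HB : sum_f_R0 (fun j => binom (S m) (S j) * bernoulli (S j)) m
               = delta0 m + bernoulli (S m) - 1).
  { pose proof (sum_f_R0_Sl (fun k => binom (S m) k * bernoulli k) m) as E.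
    rewrite tech5, sum_binom_bernoulli, binom_nn, binom_n0 in E.
    change (bernoulli 0) with 1 in E. lra. }
  assert (HB2 : sum_f_R0 (fun j => binom (S m) (S j) * 2 ^ S j * bernoulli (S j)) m
                = (2 - 2 ^ S m) * bernoulli (S m) - 1).
  { pose proof (sum_f_R0_Sl (fun k => binom (S m) k * 2 ^ k * bernoulli k) m) as E.
    rewrite sum_binom_pow2_bernoulli, binom_n0 in E.
    change (bernoulli 0) with 1 in E. rewrite pow_O in E. lra. }
  apply (Rmult_eq_reg_l (INR (S m))); [|exact Hm].
  rewrite Rmult_plus_distr_l, Hsum, HB, HB2.
  replace (INR (S m) * euler0 m) with ((2 - 2 * 2 ^ S m) * bernoulli (S m))
    by (unfold euler0; rewrite <- (tech_pow_Rmult 2 (S m)); field; exact Hm).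
  destruct m; simpl; ring.
Qed.

Lemma euler0_0 : euler0 0 = 1.
Proof. pose proof (euler0_rec 0) as E. simpl in E. lra. Qed.

Lemma sum_binom_euler0 n :
  sum_f_R0 (fun j => binom (S n) j * euler0 j) n = -2 * euler0 (S n).
Proof.
  pose proof (euler0_rec (S n)) as E. rewrite tech5, binom_nn in E. simpl delta0 in E. lra.
Qed.

Definition smooth_on (U : R -> Prop) (f : R -> R) : Prop :=
  forall n y, U y -> ex_derive (Derive_n f n) y.

Lemma smooth_on_ext U f g : (forall t, f t = g t) -> smooth_on U f -> smooth_on U g.
Proof.
  intros Hfg Hf n y Hy. apply (ex_derive_ext (Derive_n f n)); [|now apply Hf].
  intros t. now apply Derive_n_ext.
Qed.

Lemma is_derive_sum_f_R0 (F : nat -> R -> R) (dF : nat -> R) n y :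
  (forall k, (k <= n)%nat -> is_derive (F k) y (dF k)) ->
  is_derive (fun t => sum_f_R0 (fun k => F k t) n) y (sum_f_R0 dF n).
Proof.
  induction n as [|n IH]; intros HF; [now apply HF|].
  apply (is_derive_plus (fun t => sum_f_R0 (fun k => F k t) n) (F (S n))).
  - apply IH. intros; apply HF; lia.
  - now apply HF.
Qed.

Section SmoothOn.

Variable U : R -> Prop.
Hypothesis U_open : open U.

Lemma smooth_on_is_derive f n y : smooth_on U f -> U y ->
  is_derive (Derive_n f n) y (Derive_n f (S n) y).
Proof. intros Hf Hy. now apply Derive_correct, Hf. Qed.

Lemma smooth_on_locally f n y : smooth_on U f -> U y ->
  locally y (fun t => forall k, (k <= n)%nat -> ex_derive_n f k t).
Proof.
  intros Hf Hy. apply (filter_imp U); [|now apply U_open].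
  intros t Ht [|k] _; [exact I | now apply Hf].
Qed.

Lemma is_derive_leibniz_sum f g n y : smooth_on U f -> smooth_on U g -> U y ->
  is_derive (fun t => sum_f_R0 (fun k => binom n k * (Derive_n f k t * Derive_n g (n - k) t)) n) y
    (sum_f_R0 (fun k => binom (S n) k * (Derive_n f k y * Derive_n g (S n - k) y)) (S n)).
Proof.
  intros Hf Hg Hy.
  rewrite <- (sum_binom_pascal (fun k => Derive_n f k y * Derive_n g (S n - k) y)).
  apply is_derive_sum_f_R0. intros k Hk.
  replace (S n - S k)%nat with (n - k)%nat by lia.
  replace (S n - k)%nat with (S (n - k)) by lia.
  apply (is_derive_scal (fun t => Derive_n f k t * Derive_n g (n - k) t)).
  replace (Derive_n f (S k) y * Derive_n g (n - k) y + Derive_n f k y * Derive_n g (S (n - k)) y)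
    with (plus (mult (Derive_n f (S k) y) (Derive_n g (n - k) y))
               (mult (Derive_n f k y) (Derive_n g (S (n - k)) y)))
    by (unfold plus, mult; simpl; ring).
  apply (is_derive_mult (Derive_n f k) (Derive_n g (n - k)));
    try (intros; apply Rmult_comm); now apply smooth_on_is_derive.
Qed.

Lemma Derive_n_mult f g n y : smooth_on U f -> smooth_on U g -> U y ->
  Derive_n (fun t => f t * g t) n y
  = sum_f_R0 (fun k => binom n k * (Derive_n f k y * Derive_n g (n - k) y)) n.
Proof.
  intros Hf Hg. revert y; induction n as [|n IH]; intros y Hy; [simpl; ring|].
  simpl Derive_n at 1.
  rewrite (Derive_ext_loc _ (fun t =>
    sum_f_R0 (fun k => binom n k * (Derive_n f k t * Derive_n g (n - k) t)) n)).
  - apply is_derive_unique, is_derive_leibniz_sum; assumption.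
  - apply (filter_imp U); [exact IH | now apply U_open].
Qed.

Lemma smooth_on_mult f g : smooth_on U f -> smooth_on U g -> smooth_on U (fun t => f t * g t).
Proof.
  intros Hf Hg n y Hy.
  apply (ex_derive_ext_loc (fun t =>
    sum_f_R0 (fun k => binom n k * (Derive_n f k t * Derive_n g (n - k) t)) n)).
  - apply (filter_imp U); [|now apply U_open]. intros t Ht. symmetry. now apply Derive_n_mult.
  - eexists. now apply is_derive_leibniz_sum.
Qed.

End SmoothOn.

Lemma C_ext (z w : C) : Re z = Re w -> Im z = Im w -> z = w.
Proof. apply injective_projections. Qed.

Lemma Re_sum_n (u : nat -> C) n : Re (sum_n u n) = sum_f_R0 (fun k => Re (u k)) n.
Proof. induction n as [|n IH]; [now rewrite sum_O|]. rewrite sum_Sn. simpl. now rewrite <- IH. Qed.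

Lemma Im_sum_n (u : nat -> C) n : Im (sum_n u n) = sum_f_R0 (fun k => Im (u k)) n.
Proof. induction n as [|n IH]; [now rewrite sum_O|]. rewrite sum_Sn. simpl. now rewrite <- IH. Qed.

Lemma sum_n_Cmult_r (u : nat -> C) (z : C) n : sum_n (fun k => (u k * z)%C) n = (sum_n u n * z)%C.
Proof. exact (sum_n_mult_r z u n). Qed.
Lemma sum_n_Cmult_l (z : C) (u : nat -> C) n : sum_n (fun k => (z * u k)%C) n = (z * sum_n u n)%C.
Proof. exact (sum_n_mult_l z u n). Qed.
Lemma sum_n_ext_C (a b : nat -> C) n :
  (forall k, (k <= n)%nat -> a k = b k) -> sum_n a n = sum_n b n.
Proof. exact (sum_n_ext_loc a b n). Qed.
Lemma sum_n_RtoC (a : nat -> R) n : sum_n (fun k => RtoC (a k)) n = RtoC (sum_f_R0 a n).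
Proof.
  induction n as [|n IH]; [now rewrite sum_O|].
  rewrite sum_Sn, IH. simpl. now rewrite RtoC_plus. Qed.

Definition csmooth_on (U : R -> Prop) (f : R -> C) : Prop :=
  smooth_on U (fun t => Re (f t)) /\ smooth_on U (fun t => Im (f t)).

Lemma CDerive_n_mult U f g n y : open U -> csmooth_on U f -> csmooth_on U g -> U y ->
  CDerive_n (fun t => (f t * g t)%C) n y
  = sum_n (fun k => (binom n k * (CDerive_n f k y * CDerive_n g (n - k) y))%C) n.
Proof.
  intros HU [Hf1 Hf2] [Hg1 Hg2] Hy.
  apply C_ext; [rewrite Re_sum_n | rewrite Im_sum_n]; simpl.
  - rewrite (Derive_n_ext _ (fun t => Re (f t) * Re (g t) - Im (f t) * Im (g t))) by reflexivity.
    rewrite Derive_n_minus, !(Derive_n_mult U) by eauto using smooth_on_locally, smooth_on_mult.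
    rewrite <- minus_sum. apply sum_eq. intros k Hk. simpl. ring.
  - rewrite (Derive_n_ext _ (fun t => Re (f t) * Im (g t) + Im (f t) * Re (g t))) by reflexivity.
    rewrite Derive_n_plus, !(Derive_n_mult U) by eauto using smooth_on_locally, smooth_on_mult.
    rewrite <- plus_sum. apply sum_eq. intros k Hk. simpl. ring.
Qed.

Lemma cis_add a b : (cis a * cis b)%C = cis (a + b).
Proof. unfold cis. rewrite cos_plus, sin_plus. apply C_ext; simpl; ring. Qed.

Lemma CDerive_n_cis c n t :
  CDerive_n (fun s => cis (c * s)) n t = (Cpow (c * Ci) n * cis (c * t))%C.
Proof.
  revert t; induction n as [|n IH]; intros t.
  - apply C_ext; simpl; ring.
  - unfold CDerive_n; simpl Derive_n.
    rewrite (Derive_ext (Derive_n (fun s => Re (cis (c * s))) n)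
                        (fun s => Re (Cpow (c * Ci) n * cis (c * s))%C))
      by (intros; now rewrite <- IH).
    rewrite (Derive_ext (Derive_n (fun s => Im (cis (c * s))) n)
                        (fun s => Im (Cpow (c * Ci) n * cis (c * s))%C))
      by (intros; now rewrite <- IH).
    rewrite Cpow_S. destruct (Cpow (c * Ci) n) as [p q].
    unfold cis. apply C_ext; simpl; apply is_derive_unique; auto_derive; auto; ring.
Qed.

Lemma csmooth_on_cis U c : csmooth_on U (fun t => cis (c * t)).
Proof.
  split; intros n y _.
  - apply (ex_derive_ext (fun t => Re (Cpow (c * Ci) n * cis (c * t))%C)).
    { intros t. symmetry. exact (f_equal Re (CDerive_n_cis c n t)). }
    destruct (Cpow (c * Ci) n) as [p q]. unfold cis. simpl. auto_derive; auto.
  - apply (ex_derive_ext (fun t => Im (Cpow (c * Ci) n * cis (c * t))%C)).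
    { intros t. symmetry. exact (f_equal Im (CDerive_n_cis c n t)). }
    destruct (Cpow (c * Ci) n) as [p q]. unfold cis. simpl. auto_derive; auto.
Qed.

Lemma CDerive_n_mult_cis U f c n y : open U -> csmooth_on U f -> U y ->
  CDerive_n (fun t => (f t * cis (c * t))%C) n y
  = (sum_n (fun k => binom n k * CDerive_n f k y * Cpow (c * Ci) (n - k)) n * cis (c * y))%C.
Proof.
  intros HU Hf Hy. rewrite (CDerive_n_mult U), <- sum_n_Cmult_r by auto using csmooth_on_cis.
  apply sum_n_ext_C. intros k _. rewrite CDerive_n_cis. ring.
Qed.

Definition in01 (t : R) : Prop := 0 < t < 1.

Lemma open_in01 : open in01.
Proof. apply open_and; [apply open_gt | apply open_lt]. Qed.

Lemma in01_half : in01 (1 / 2).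
Proof. unfold in01; lra. Qed.

Lemma sin_PI_pos t : in01 t -> 0 < sin (PI * t).
Proof. intros [H0 H1]. pose proof PI_RGT_0. apply sin_gt_0; nra. Qed.

Inductive cot_poly : (R -> R) -> Prop :=
  | cot_poly_cot : cot_poly (fun t => cot (PI * t))
  | cot_poly_const a : cot_poly (fun _ => a)
  | cot_poly_plus f g : cot_poly f -> cot_poly g -> cot_poly (fun t => f t + g t)
  | cot_poly_mult f g : cot_poly f -> cot_poly g -> cot_poly (fun t => f t * g t).

(* Closure under differentiation: [d/dt cot (pi t) = - pi (1 + cot (pi t) ^ 2)]. *)
Lemma cot_poly_derive f : cot_poly f ->
  exists df, cot_poly df /\ forall y, in01 y -> is_derive f y (df y).
Proof.
  induction 1 as [| a | f g _ [df [Hdf Df]] _ [dg [Hdg Dg]]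
                  | f g Hf [df [Hdf Df]] Hg [dg [Hdg Dg]]].
  - exists (fun t => - PI + - PI * (cot (PI * t) * cot (PI * t))). split.
    + repeat constructor.
    + intros y Hy. pose proof (sin_PI_pos y Hy). unfold cot. auto_derive; [lra|]. field. lra.
  - exists (fun _ => 0). split; [constructor|]. intros y _. auto_derive; auto.
  - exists (fun t => df t + dg t). split; [now constructor|].
    intros y Hy. apply (is_derive_plus f g); auto.
  - exists (fun t => df t * g t + f t * dg t).
    split; [apply cot_poly_plus; now apply cot_poly_mult|].
    intros y Hy. apply (is_derive_mult f g); auto. intros; apply Rmult_comm.
Qed.

Lemma cot_poly_Derive_n f n : cot_poly f ->
  exists fn, cot_poly fn /\ forall y, in01 y -> Derive_n f n y = fn y.
Proof.
  intros Hf. induction n as [|n [fn [Hfn Dfn]]]; [now exists f|].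
  destruct (cot_poly_derive fn Hfn) as [dfn [Hdfn Ddfn]].
  exists dfn. split; [exact Hdfn|]. intros y Hy. simpl.
  rewrite (Derive_ext_loc _ fn); [now apply is_derive_unique, Ddfn|].
  apply (filter_imp in01); [exact Dfn | now apply open_in01].
Qed.

Lemma cot_poly_smooth f : cot_poly f -> smooth_on in01 f.
Proof.
  intros Hf n y Hy.
  destruct (cot_poly_Derive_n f n Hf) as [fn [Hfn Dfn]].
  destruct (cot_poly_derive fn Hfn) as [dfn [_ Ddfn]].
  apply (ex_derive_ext_loc fn).
  - apply (filter_imp in01); [|now apply open_in01]. intros t Ht. now rewrite Dfn.
  - exists (dfn y). now apply Ddfn.
Qed.

Definition hcot (t : R) : C := (Ci - RtoC (cot (PI * t)))%C.

Lemma csmooth_on_hcot : csmooth_on in01 hcot.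
Proof.
  split.
  - apply (smooth_on_ext _ (fun t => -1 * cot (PI * t))); [intros; simpl; ring|].
    apply cot_poly_smooth. repeat constructor.
  - apply (smooth_on_ext _ (fun _ => 1)); [intros; simpl; ring|].
    apply cot_poly_smooth. constructor.
Qed.

(* [i - cot x = - e^(-ix) / sin x], so [hcot t * e^(2 i pi t) = - cot (pi t) - i]. *)
Lemma hcot_mul_cis t : in01 t -> (hcot t * cis (2 * PI * t))%C = (hcot t - 2 * Ci)%C.
Proof.
  intros Ht. pose proof (sin_PI_pos t Ht) as Hs.
  replace (2 * PI * t) with (2 * (PI * t)) by ring.
  unfold hcot, cis, cot. rewrite cos_2a, sin_2a.
  pose proof (sin2_cos2 (PI * t)) as Hp. unfold Rsqr in Hp.
  set (s := sin (PI * t)) in *. set (c := cos (PI * t)) in *.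
  apply C_ext; simpl.
  - transitivity (- (c / s) * (s * s + c * c)); [field; lra | rewrite Hp; ring].
  - transitivity (- (s * s + c * c)); [field; lra | rewrite Hp; ring].
Qed.

Lemma CDerive_n_hcot_cis n :
  CDerive_n (fun t => (hcot t * cis (2 * PI * t))%C) (S n) (1 / 2) = CDerive_n hcot (S n) (1 / 2).
Proof.
  assert (Hloc : locally (1 / 2) (fun t => (hcot t * cis (2 * PI * t))%C = (hcot t - 2 * Ci)%C)).
  { apply (filter_imp in01); [exact hcot_mul_cis | exact (open_in01 _ in01_half)]. }
  unfold CDerive_n. apply C_ext; cbn [Re Im fst snd].
  - apply Derive_n_ext_loc. revert Hloc; apply filter_imp. intros t Ht. rewrite Ht. simpl. ring.
  - rewrite (Derive_n_ext_loc _ (fun _ => -1)), (Derive_n_ext (fun t => Im (hcot t)) (fun _ => 1)),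
      !Derive_n_const;
      [reflexivity | intros; simpl; ring |].
    revert Hloc; apply filter_imp. intros t Ht. rewrite Ht. simpl. ring.
Qed.

Lemma CDerive_n_hcot_half n :
  CDerive_n hcot n (1 / 2) = (Ci * Cpow (RtoC (2 * PI) * Ci) n * euler0 n)%C.
Proof.
  set (w := (RtoC (2 * PI) * Ci)%C).
  induction n as [|n IH] using Nat.strong_induction_le.
  - unfold CDerive_n, hcot, cot. simpl Derive_n.
    replace (PI * (1 / 2)) with (PI / 2) by field.
    rewrite cos_PI2, sin_PI2, euler0_0. apply C_ext; simpl; field.
  - pose proof (CDerive_n_hcot_cis n) as E.
    rewrite (CDerive_n_mult_cis in01) in E
      by (apply open_in01 || apply csmooth_on_hcot || apply in01_half).
    fold w in E. rewrite sum_Sn in E. change plus with Cplus in E.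
    rewrite (sum_n_ext_C _ (fun k => (Ci * Cpow w (S n)) * RtoC (binom (S n) k * euler0 k))%C) in E.
    2:{ intros k Hk. rewrite IH by lia.
        replace (Cpow w (S n)) with (Cpow w k * Cpow w (S n - k))%C
          by (rewrite <- Cpow_add_r; f_equal; lia).
        rewrite RtoC_mult. ring. }
    rewrite sum_n_Cmult_l, sum_n_RtoC, sum_binom_euler0, binom_nn, Nat.sub_diag in E.
    replace (2 * PI * (1 / 2)) with PI in E by field.
    unfold cis in E. rewrite cos_PI, sin_PI in E.
    assert (Hsolve : forall X H : C, ((X * RtoC (-2) + H) * RtoC (-1))%C = H -> H = X).
    { intros [x1 x2] [h1 h2] EH.
      apply C_ext; [apply (f_equal Re) in EH | apply (f_equal Im) in EH]; simpl in *; lra. }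
    apply Hsolve. etransitivity; [|exact E].
    rewrite RtoC_mult. change (-1, 0) with (RtoC (-1)). ring.
Qed.

Lemma CDerive_n_cot_cis_half n beta :
  CDerive_n (fun t => ((Ci - RtoC (cot (PI * t))) * cis (2 * PI * beta * t))%C) n (1 / 2)
  = (Ci * Cpow (RtoC (2 * PI) * Ci) n * cis (PI * beta) * euler_poly n beta)%C.
Proof.
  set (w := (RtoC (2 * PI) * Ci)%C).
  rewrite (CDerive_n_mult_cis in01 hcot)
    by (apply open_in01 || apply csmooth_on_hcot || apply in01_half).
  rewrite (sum_n_ext_C _ (fun k =>
    (Ci * Cpow w n) * RtoC (binom n k * euler0 k * beta ^ (n - k)))%C).
  - rewrite sum_n_Cmult_l, sum_n_RtoC, <- euler_poly_binomial.
    replace (2 * PI * beta * (1 / 2)) with (PI * beta) by field. ring.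
  - intros k Hk. rewrite CDerive_n_hcot_half. fold w.
    replace (RtoC (2 * PI * beta) * Ci)%C with (w * RtoC beta)%C
      by (unfold w; apply C_ext; simpl; ring).
    replace (Cpow w n) with (Cpow w k * Cpow w (n - k))%C by (rewrite <- Cpow_add_r; f_equal; lia).
    rewrite Cpow_mult_l, <- RtoC_pow, !RtoC_mult. ring.
Qed.

Theorem lemma4p3 (m : nat) (beta : R) :
  (1 <= m)%nat ->
  F m beta (1 / 2) =
  (RtoC (2 ^ (m - 1)) * Cpow Ci m * cis (INR m * PI / 2)
   * RtoC (euler_poly (m - 1) beta))%C.
Proof.
  intros Hm. destruct m as [|n]; [lia|]. unfold F. replace (S n - 1)%nat with n by lia.
  rewrite CDerive_n_cot_cis_half.
  replace (INR (S n) * PI * (1 / 2)) with (INR (S n) * PI / 2) by field.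
  replace (- 2 * PI * beta * (1 / 2)) with (- (PI * beta)) by field.
  replace (PI * (1 / 2)) with (PI / 2) by field. rewrite sin_PI2, pow1.
  rewrite Cpow_mult_l, <- RtoC_pow, Cpow_S.
  transitivity (cis (INR (S n) * PI / 2) * (cis (- (PI * beta)) * cis (PI * beta))
                * RtoC (1 / PI ^ n * (2 * PI) ^ n) * (Ci * Cpow Ci n) * euler_poly n beta)%C.
  { rewrite RtoC_mult. ring. }
  rewrite cis_add, Rplus_opp_l.
  replace (1 / PI ^ n * (2 * PI) ^ n) with (2 ^ n)
    by (rewrite Rpow_mult_distr; field; apply pow_nonzero, PI_neq0).
  replace (cis 0) with (RtoC 1) by (unfold cis; now rewrite cos_0, sin_0).
  ring.
Qed.
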